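(* Let $S$ be a countable discrete inverse semigroup with identity, $\alpha\colon S\to\mathcal I(X)$ a representation and $\mathrm{Typ}(\alpha)$ its type semigroup, equipped with the algebraic preorder. Then: (a) for $x,y\in\mathrm{Typ}(\alpha)$, if $x\le y$ and $y\le x$ then $x=y$; (b) a subset $A\subseteq X$ is $S$-paradoxical if and only if $[A]=2[A]$; (c) for $x,y\in\mathrm{Typ}(\alpha)$ and $n\ge1$, if $nx=ny$ then $x=y$; (d) for $x\in\mathrm{Typ}(\alpha)$, if $(n+1)x\le nx$ for some $n\in\mathbb N$, then $x=2x$.
   Context: Inverse semigroup: each $s$ has a unique $s^*$ with $ss^*s=s$, $s^*ss^*=s^*$. A representation is a unital homomorphism $\alpha\colon S\to\mathcal I(X)$ into partial bijections of $X$; $D_{s^*s}$ is the domain of $\alpha_s$. $\mathrm{Typ}(\alpha)$ is the commutative monoid generated by symbols $[A]$, $A\subseteq X$, subject to: $[\emptyset]=0$; $[A]=[\alpha_s(A)]$ whenever $s\in S$, $A\subseteq D_{s^*s}$; $[A\cup B]=[A]+[B]$ whenever $A\cap B=\emptyset$. The algebraic preorder: $x\le y$ iff $x+z=y$ for some $z$; $nx$ denotes the $n$-fold sum. $A\subseteq X$ is $S$-paradoxical if there are $A_i,B_j\subseteq X$, $s_i,t_j\in S$ with $A_i\subseteq D_{s_i^*s_i}$, $B_j\subseteq D_{t_j^*t_j}$, $A=\bigsqcup_{i=1}^n\alpha_{s_i}(A_i)=\bigsqcup_{j=1}^m\alpha_{t_j}(B_j)\supseteq A_1\sqcup\dots\sqcup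 A_n\sqcup B_1\sqcup\dots\sqcup B_m$. *)

From Stdlib Require Import List Arith.
Import ListNotations.
Set Implicit Arguments.

Record InvSemigroup := {
  isg_car :> Type;
  isg_mul : isg_car -> isg_car -> isg_car;
  isg_one : isg_car;
  isg_star : isg_car -> isg_car;
  isg_assoc : forall a b c, isg_mul a (isg_mul b c) = isg_mul (isg_mul a b) c;
  isg_one_l : forall a, isg_mul isg_one a = a;
  isg_one_r : forall a, isg_mul a isg_one = a;
  isg_star_1 : forall s, isg_mul (isg_mul s (isg_star s)) s = s;
  isg_star_2 : forall s, isg_mul (isg_mul (isg_star s) s) (isg_star s) = isg_star s;
  isg_star_uniq : forall s t, isg_mul (isg_mul s t) s = s ->
                  isg_mul (isg_mul t s) t = t -> t = isg_star s
}.

Definition countable (T : Type) : Prop :=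
  exists f : T -> nat, forall a b, f a = f b -> a = b.

Definition set (X : Type) := X -> Prop.
Definition set0 {X} : set X := fun _ => False.
Definition subset {X} (A B : set X) := forall x, A x -> B x.
Definition seteq {X} (A B : set X) := forall x, A x <-> B x.
Definition disjoint {X} (A B : set X) := forall x, A x -> B x -> False.
Definition setU {X} (A B : set X) : set X := fun x => A x \/ B x.
Definition bigunion {X} (l : list (set X)) : set X :=
  fun x => exists B, In B l /\ B x.
Definition pairwise_disjoint {X} (l : list (set X)) : Prop :=
  forall i j, i < length l -> j < length l -> i <> j ->
    disjoint (nth i l set0) (nth j l set0).

(** A representation S -> I(X): alpha_s is the partial bijection with
    domain [rdom s] and map [ract s] (injective on its domain);
    it is a unital semigroup homomorphism for composition of partial maps. *)
Record Rep (S : InvSemigroup) (X : Type) := {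
  rdom : S -> set X;
  ract : S -> X -> X;
  ract_inj : forall s x y, rdom s x -> rdom s y -> ract s x = ract s y -> x = y;
  rdom_one : forall x, rdom (isg_one S) x;
  ract_one : forall x, ract (isg_one S) x = x;
  rdom_mul : forall s t x,
    rdom (isg_mul S s t) x <-> (rdom t x /\ rdom s (ract t x));
  ract_mul : forall s t x, rdom (isg_mul S s t) x ->
    ract (isg_mul S s t) x = ract s (ract t x)
}.

Section TypeSemigroup.
Variables (S : InvSemigroup) (X : Type) (alpha : Rep S X).

Definition Dom (s : S) : set X := rdom alpha (isg_mul S (isg_star S s) s).
Definition img (s : S) (A : set X) : set X :=
  fun y => exists x, A x /\ y = ract alpha s x.

(** Typ(alpha): the free commutative monoid on symbols [A] (formal sums =
    lists of subsets, + = concatenation, 0 = nil) modulo the smallest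
    congruence [teq] containing the defining relations. *)
Inductive teq : list (set X) -> list (set X) -> Prop :=
| teq_refl l : teq l l
| teq_sym l m : teq l m -> teq m l
| teq_trans l m n : teq l m -> teq m n -> teq l n
| teq_comm l m : teq (l ++ m) (m ++ l)
| teq_addr l m k : teq l m -> teq (l ++ k) (m ++ k)
| teq_ext A B : seteq A B -> teq [A] [B]
| teq_empty : teq [set0] []
| teq_act s A : subset A (Dom s) -> teq [A] [img s A]
| teq_union A B : disjoint A B -> teq [setU A B] [A; B].

Definition Typ := list (set X).
Definition tcls (A : set X) : Typ := [A].
Definition tadd (x y : Typ) : Typ := x ++ y.
Fixpoint tmul (n : nat) (x : Typ) : Typ :=
  match n with O => [] | Datatypes.S k => tadd x (tmul k x) end.
Definition tle (x y : Typ) : Prop := exists z, teq (tadd x z) y.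

Definition paradoxical (A : set X) : Prop :=
  exists (As Bs : list (set X * S)),
    (forall p, In p As -> subset (fst p) (Dom (snd p))) /\
    (forall p, In p Bs -> subset (fst p) (Dom (snd p))) /\
    pairwise_disjoint (map (fun p => img (snd p) (fst p)) As) /\
    seteq A (bigunion (map (fun p => img (snd p) (fst p)) As)) /\
    pairwise_disjoint (map (fun p => img (snd p) (fst p)) Bs) /\
    seteq A (bigunion (map (fun p => img (snd p) (fst p)) Bs)) /\
    pairwise_disjoint (map fst As ++ map fst Bs) /\
    subset (bigunion (map fst As ++ map fst Bs)) A.

End TypeSemigroup.

(** A formal sum [l = [A_0; ...; A_(k-1)]] of subsets of [X] (an element of
    [Typ X]) is read as the disjoint union of the sets [{i} x A_i], a set of
    points [(i, x)].  A map between such point sets is _piecewise_ if at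
    every point it is one of finitely many moves [(i, x) |-> (j, alpha_s x)].
    The central fact is that two formal sums are equal in [Typ(alpha)] iff
    their point sets are in piecewise bijection ([teq_equi], [equi_teq]):
    each defining relation of [Typ(alpha)] is an evident piecewise bijection,
    and conversely a piecewise bijection is cut into finitely many pieces
    along its moves.  Through this dictionary
    - (a) is the Schröder–Bernstein argument for piecewise injections;
    - (b) reads a paradoxical decomposition as [2 [A] <= [A]], and conversely
      cuts a bijection [A ~ A + A] into the pieces of such a decomposition;
    - (c) applies Hall's marriage theorem to the locally finite bipartite graph
      linking a point of [x] to the images of its [n] copies in [n y], which
      gives piecewise injections [x -> y] and [y -> x];
    - (d) follows from (a) and (c): [(n+1) x <= n x] forces [(n+1) x = n x],
      hence [(n+1)(2 x) = (n+1) x]. *)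

From Stdlib Require Import List Arith Lia Permutation Relations.
From Stdlib Require Import Classical ClassicalEpsilon.
From Stdlib Require Import FunctionalExtensionality PropExtensionality.
Import ListNotations.
Set Implicit Arguments.

Section Representation.
Variables (Sg : InvSemigroup) (X : Type) (alpha : Rep Sg X).
Notation mul := (isg_mul Sg).
Notation star := (isg_star Sg).
Notation rd := (rdom alpha).
Notation ra := (ract alpha).

Lemma ract_star_cancel s x : rd s x -> rd (star s) (ra s x) /\ ra (star s) (ra s x) = x.
Proof.
  intro Hx.
  assert (Hsss : rd (mul (mul s (star s)) s) x) by (rewrite isg_star_1; exact Hx).
  apply (rdom_mul alpha) in Hsss as [_ Hss].
  assert (Hstar := Hss). apply (rdom_mul alpha) in Hstar as [Hstar Hback].
  split; [exact Hstar|].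
  assert (E : ra (mul (mul s (star s)) s) x = ra s x) by (rewrite isg_star_1; reflexivity).
  rewrite (ract_mul alpha) in E by (apply (rdom_mul alpha); auto).
  rewrite (ract_mul alpha) in E by exact Hss.
  eapply (ract_inj alpha); eauto.
Qed.

Lemma Dom_iff s x : Dom alpha s x <-> rd s x.
Proof.
  unfold Dom. rewrite (rdom_mul alpha). split; [tauto|].
  intro Hx; split; [exact Hx | apply (ract_star_cancel s x Hx)].
Qed.

End Representation.

Section TypeCongruence.
Variables (Sg : InvSemigroup) (X : Type) (alpha : Rep Sg X).
Notation teq := (teq alpha).

Lemma teq_app l l' m m' : teq l l' -> teq m m' -> teq (l ++ m) (l' ++ m').
Proof.
  intros Hl Hm. apply teq_trans with (l' ++ m); [apply teq_addr; auto|].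
  apply teq_trans with (m ++ l'); [apply teq_comm|].
  apply teq_trans with (m' ++ l'); [apply teq_addr; auto| apply teq_comm].
Qed.

Lemma teq_cons a b l m : teq [a] [b] -> teq l m -> teq (a :: l) (b :: m).
Proof. exact (@teq_app [a] [b] l m). Qed.

Lemma teq_perm l m : Permutation l m -> teq l m.
Proof.
  induction 1.
  - apply teq_refl.
  - apply teq_cons; auto; apply teq_refl.
  - apply (teq_app (l := [y; x]) (l' := [x; y])); [apply (teq_comm _ [y] [x])| apply teq_refl].
  - eapply teq_trans; eauto.
Qed.

Lemma teq_empty_set A : (forall a, ~ A a) -> teq [A] [].
Proof.
  intro HA. apply teq_trans with [set0]; [|apply teq_empty].
  apply teq_ext. intro a. unfold set0. split; [apply HA| tauto].
Qed.

Lemma teq_map_pointwise (F G : nat -> set X) ks :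
  (forall k, In k ks -> teq [F k] [G k]) -> teq (map F ks) (map G ks).
Proof. induction ks; simpl; intros; [apply teq_refl| apply teq_cons; auto]. Qed.

Lemma teq_map_ext (F G : nat -> set X) ks :
  (forall k, In k ks -> seteq (F k) (G k)) -> teq (map F ks) (map G ks).
Proof. intros; apply teq_map_pointwise; intros; apply teq_ext; auto. Qed.

Lemma teq_all_empty (F : nat -> set X) ks :
  (forall k a, In k ks -> ~ F k a) -> teq [] (map F ks).
Proof.
  induction ks as [|k ks IH]; simpl; intros HF; [apply teq_refl|].
  apply teq_sym, (teq_app (l := [F k]) (l' := []) (m := map F ks) (m' := [])).
  - apply teq_empty_set; eauto.
  - apply teq_sym; auto.
Qed.

Lemma teq_split A (C : X -> Prop) :
  teq [A] [fun a => A a /\ C a; fun a => A a /\ ~ C a].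
Proof.
  apply teq_trans with [setU (fun a => A a /\ C a) (fun a => A a /\ ~ C a)].
  - apply teq_ext. intro a; unfold setU. destruct (classic (C a)); tauto.
  - apply teq_union. intros a [] []; tauto.
Qed.

Lemma teq_partition_by (f : X -> nat) ks : NoDup ks -> forall A,
  (forall a, A a -> In (f a) ks) -> teq [A] (map (fun k a => A a /\ f a = k) ks).
Proof.
  induction 1 as [|k ks Hk Hnd IH]; intros A HA; simpl.
  - apply teq_empty_set. intros a Ha. exact (HA a Ha).
  - eapply teq_trans; [apply (teq_split A (fun a => f a = k))|].
    apply (teq_cons (l := [fun a => A a /\ ~ f a = k])).
    + apply teq_ext; intro; tauto.
    + eapply teq_trans; [apply (IH (fun a => A a /\ ~ f a = k))|].
      * intros a [Ha Hn]. destruct (HA a Ha); [congruence| auto].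
      * apply teq_map_ext. intros k' Hk' a. split; [tauto|].
        intros [Ha Hf]. repeat split; auto. intro E; subst. congruence.
Qed.

Lemma teq_disjoint_union L : forall A,
  pairwise_disjoint L -> seteq A (bigunion L) -> teq [A] L.
Proof.
  induction L as [|B L IH]; intros A Hd Hs.
  - apply teq_empty_set. intros a Ha. apply Hs in Ha as [B' [[] _]].
  - apply teq_trans with [setU B (bigunion L)].
    + apply teq_ext. intro a. rewrite (Hs a). unfold bigunion, setU. simpl. split.
      * intros [B' [[<-|HB] Hx]]; [left; auto| right; eauto].
      * intros [H|[B' [HB Hx]]]; eauto.
    + eapply teq_trans; [apply teq_union|].
      * intros a HB [B' [HB' Ha]]. apply In_nth with (d := set0) in HB' as [j [Hj Ej]].
        refine (Hd 0 (S j) _ _ _ a _ _); simpl; try lia; [exact HB| rewrite Ej; exact Ha].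
      * apply teq_cons; [apply teq_refl|]. apply IH; [|intro; reflexivity].
        intros i j Hi Hj Hij. apply (Hd (S i) (S j)); simpl; lia.
Qed.

End TypeCongruence.

Section PiecewiseMaps.
Variables (Sg : InvSemigroup) (X : Type) (alpha : Rep Sg X).
Notation mul := (isg_mul Sg).
Notation star := (isg_star Sg).
Notation one := (isg_one Sg).
Notation rd := (rdom alpha).
Notation ra := (ract alpha).

Definition pt := (nat * X)%type.
Definition pts (l : list (set X)) (p : pt) : Prop := nth (fst p) l set0 (snd p).

Definition move := (Sg * nat * nat)%type.
Definition applicable (m : move) (p : pt) :=
  fst p = snd (fst m) /\ rd (fst (fst m)) (snd p).
Definition apply_move (m : move) (p : pt) : pt := (snd m, ra (fst (fst m)) (snd p)).

Definition piecewise (P : pt -> Prop) (h : pt -> pt) :=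
  exists ms : list move, forall p, P p ->
    exists m, In m ms /\ applicable m p /\ h p = apply_move m p.

Definition PInj (P Q : pt -> Prop) h :=
  piecewise P h /\ (forall p, P p -> Q (h p)) /\
  (forall p q, P p -> P q -> h p = h q -> p = q).
Definition PBij (P Q : pt -> Prop) h := PInj P Q h /\ (forall q, Q q -> exists p, P p /\ h p = q).
Definition equi l m := exists h, PBij (pts l) (pts m) h.

Definition move_comp (m2 m1 : move) : move :=
  ((mul (fst (fst m2)) (fst (fst m1)), snd (fst m1)), snd m2).
Definition move_inv (m : move) : move := ((star (fst (fst m)), snd m), snd (fst m)).

Lemma move_comp_spec m1 m2 p : applicable m1 p -> applicable m2 (apply_move m1 p) ->
  applicable (move_comp m2 m1) p /\
  apply_move (move_comp m2 m1) p = apply_move m2 (apply_move m1 p).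
Proof.
  destruct m1 as [[s1 i1] j1], m2 as [[s2 i2] j2], p as [i a].
  unfold applicable, apply_move, move_comp; simpl. intros [E1 H1] [E2 H2].
  assert (H : rd (mul s2 s1) a) by (apply (rdom_mul alpha); auto).
  split; [auto|]. rewrite (ract_mul alpha) by exact H. reflexivity.
Qed.

Lemma move_inv_spec m p : applicable m p ->
  applicable (move_inv m) (apply_move m p) /\ apply_move (move_inv m) (apply_move m p) = p.
Proof.
  destruct m as [[s i] j], p as [i' a]. unfold applicable, apply_move, move_inv; simpl.
  intros [E H]. destruct (ract_star_cancel alpha s a H) as [H1 H2].
  split; auto. rewrite H2, E; reflexivity.
Qed.

Definition inv_on (P : pt -> Prop) (h : pt -> pt) (q : pt) : pt :=
  match excluded_middle_informative (exists p, P p /\ h p = q) with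
  | left H => proj1_sig (constructive_indefinite_description _ H)
  | right _ => q end.

Lemma inv_on_spec P h q : (exists p, P p /\ h p = q) ->
  P (inv_on P h q) /\ h (inv_on P h q) = q.
Proof.
  intro H. unfold inv_on. destruct (excluded_middle_informative _); [|contradiction].
  apply proj2_sig.
Qed.

Lemma inv_on_h P h p : (forall p q, P p -> P q -> h p = h q -> p = q) -> P p ->
  inv_on P h (h p) = p.
Proof. intros Hi Hp. destruct (@inv_on_spec P h (h p)) as [H1 H2]; eauto. Qed.

Lemma piecewise_sub P Q h : (forall p, Q p -> P p) -> piecewise P h -> piecewise Q h.
Proof. intros HQ [ms Hms]; exists ms; auto. Qed.

Lemma piecewise_comp P Q h1 h2 : piecewise P h1 -> (forall p, P p -> Q (h1 p)) ->
  piecewise Q h2 -> piecewise P (fun p => h2 (h1 p)).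
Proof.
  intros [ms1 H1] HPQ [ms2 H2].
  exists (flat_map (fun m1 => map (fun m2 => move_comp m2 m1) ms2) ms1).
  intros p Hp. destruct (H1 p Hp) as [m1 [I1 [O1 E1]]].
  destruct (H2 (h1 p) (HPQ p Hp)) as [m2 [I2 [O2 E2]]].
  rewrite E1 in O2. destruct (move_comp_spec O1 O2) as [O E].
  exists (move_comp m2 m1). split; [|split; auto].
  - apply in_flat_map. exists m1; split; auto.
    apply (in_map (fun m2 => move_comp m2 m1)); auto.
  - rewrite E2, E1, E; reflexivity.
Qed.

Lemma piecewise_inv P h : piecewise P h -> (forall p q, P p -> P q -> h p = h q -> p = q) ->
  piecewise (fun q => exists p, P p /\ h p = q) (inv_on P h).
Proof.
  intros [ms Hms] Hi. exists (map move_inv ms). intros q [p [Hp <-]].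
  destruct (Hms p Hp) as [m [Im [Om Em]]]. exists (move_inv m).
  destruct (move_inv_spec Om) as [O E]. rewrite Em in *.
  split; [apply in_map; auto| split; auto].
  rewrite E, <- Em. apply inv_on_h; auto.
Qed.

Lemma piecewise_if P (C : pt -> Prop) h1 h2 :
  piecewise (fun p => P p /\ C p) h1 -> piecewise (fun p => P p /\ ~ C p) h2 ->
  piecewise P (fun p => if excluded_middle_informative (C p) then h1 p else h2 p).
Proof.
  intros [ms1 H1] [ms2 H2]. exists (ms1 ++ ms2). intros p Hp.
  destruct (excluded_middle_informative (C p)) as [c|c].
  - destruct (H1 p (conj Hp c)) as [m [? ?]]. exists m; split; auto. apply in_or_app; auto.
  - destruct (H2 p (conj Hp c)) as [m [? ?]]. exists m; split; auto. apply in_or_app; auto.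
Qed.

Lemma piecewise_reindex P (g : pt -> nat) N M : (forall p, P p -> fst p < N /\ g p < M) ->
  piecewise P (fun p => (g p, snd p)).
Proof.
  intros HB. exists (flat_map (fun i => map (fun j => ((one, i), j)) (seq 0 M)) (seq 0 N)).
  intros [i a] Hp. destruct (HB _ Hp) as [Hi Hj]; simpl in *.
  exists ((one, i), g (i, a)). split; [|split].
  - apply in_flat_map. exists i. split; [apply in_seq; lia|]. apply in_map, in_seq; lia.
  - split; [reflexivity| apply (rdom_one alpha)].
  - unfold apply_move; simpl. rewrite (ract_one alpha). reflexivity.
Qed.

Lemma pts_bound l p : pts l p -> fst p < length l.
Proof.
  unfold pts. destruct (Nat.lt_ge_cases (fst p) (length l)) as [H|H]; auto.
  rewrite nth_overflow by exact H. intros [].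
Qed.

Lemma pts_app l k i a : pts (l ++ k) (i, a) <->
  (i < length l /\ pts l (i, a)) \/ (length l <= i /\ pts k (i - length l, a)).
Proof.
  unfold pts; simpl. destruct (Nat.lt_ge_cases i (length l)) as [H|H].
  - rewrite app_nth1 by auto. split; [auto| intros [[]|[]]; auto; lia].
  - rewrite app_nth2 by auto. split; [auto| intros [[]|[]]; auto; lia].
Qed.

Lemma pts_single A i a : pts [A] (i, a) <-> i = 0 /\ A a.
Proof.
  unfold pts; destruct i as [|[|i]]; simpl; unfold set0; split; intros H;
    try tauto; try (destruct H; discriminate); destruct i; contradiction.
Qed.

Lemma pts_two A B i a : pts [A; B] (i, a) <-> (i = 0 /\ A a) \/ (i = 1 /\ B a).
Proof.
  unfold pts; destruct i as [|[|i]]; simpl.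
  - split; [auto| intros [[]|[]]; auto; discriminate].
  - split; [auto| intros [[]|[]]; auto; discriminate].
  - split; [destruct i; intros []| intros [[]|[]]; discriminate].
Qed.

Lemma PBij_id P Q N : (forall p, P p <-> Q p) -> (forall p, P p -> fst p < N) ->
  PBij P Q (fun p => p).
Proof.
  intros HPQ HN. split; [split; [|split]|].
  - exists (flat_map (fun i => [((one, i), i)]) (seq 0 N)). intros [i a] Hp.
    exists ((one, i), i). split; [|split].
    + apply in_flat_map. exists i. split; [apply in_seq; specialize (HN _ Hp); simpl in HN; lia|].
      left; reflexivity.
    + split; [reflexivity| apply (rdom_one alpha)].
    + unfold apply_move; simpl. rewrite (ract_one alpha). reflexivity.
  - intros; apply HPQ; auto.
  - auto.
  - intros q Hq; exists q; split; auto; apply HPQ; auto.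
Qed.

Lemma PBij_comp P Q R h1 h2 : PBij P Q h1 -> PBij Q R h2 -> PBij P R (fun p => h2 (h1 p)).
Proof.
  intros [[pw1 [m1 i1]] s1] [[pw2 [m2 i2]] s2].
  split; [split; [|split]|].
  - eapply piecewise_comp; eauto.
  - auto.
  - intros p q Hp Hq E. apply i1; auto.
  - intros r Hr. destruct (s2 r Hr) as [q [Hq <-]]. destruct (s1 q Hq) as [p [Hp <-]]. eauto.
Qed.

Lemma PBij_inv P Q h : PBij P Q h -> PBij Q P (inv_on P h).
Proof.
  intros [[pw1 [m1 i1]] s1].
  assert (Hs : forall q, Q q -> P (inv_on P h q) /\ h (inv_on P h q) = q)
    by (intros; apply inv_on_spec; auto).
  split; [split; [|split]|].
  - eapply piecewise_sub; [|apply piecewise_inv; eauto]. simpl; auto.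
  - intros q Hq; apply Hs; auto.
  - intros p q Hp Hq E. rewrite <- (proj2 (Hs p Hp)), <- (proj2 (Hs q Hq)), E. reflexivity.
  - intros p Hp. exists (h p). split; auto. apply inv_on_h; auto.
Qed.

End PiecewiseMaps.

Section TeqToEqui.
Variables (Sg : InvSemigroup) (X : Type) (alpha : Rep Sg X).
Notation ra := (ract alpha).
Notation equi := (equi alpha).

(** Swapping the two blocks of [l ++ m] only permutes indices. *)
Lemma equi_comm l m : equi (l ++ m) (m ++ l).
Proof.
  set (g := fun p : pt X =>
    if Nat.ltb (fst p) (length l) then fst p + length m else fst p - length l).
  exists (fun p => (g p, snd p)). split; [split; [|split]|].
  - apply piecewise_reindex with (N := length l + length m) (M := length l + length m).
    intros [i a] Hp. apply pts_bound in Hp. rewrite length_app in Hp. simpl in *.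
    unfold g; simpl. destruct (Nat.ltb_spec i (length l)); lia.
  - intros [i a] Hp. unfold g; simpl. apply pts_app in Hp.
    destruct (Nat.ltb_spec i (length l)); apply pts_app.
    + right. split; [lia|]. replace (i + length m - length m) with i by lia.
      destruct Hp as [[]|[]]; auto; lia.
    + left. destruct Hp as [[]|[Hi Hp]]; [lia|]. split; auto.
      apply pts_bound in Hp. simpl in Hp; lia.
  - intros [i a] [j b] Hp Hq E. injection E; intros E1 E2. subst b.
    apply pts_bound in Hp, Hq. rewrite length_app in *. simpl in *.
    unfold g in E2; simpl in E2.
    destruct (Nat.ltb_spec i (length l)), (Nat.ltb_spec j (length l)); f_equal; lia.
  - intros [j b] Hq. apply pts_app in Hq. destruct Hq as [[Hj Hq]|[Hj Hq]].
    + exists (j + length l, b). unfold g; simpl.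
      destruct (Nat.ltb_spec (j + length l) (length l)); [lia|].
      split; [|f_equal; lia]. apply pts_app; right; split; [lia|].
      replace (j + length l - length l) with j by lia; auto.
    + exists (j - length m, b). unfold g; simpl.
      destruct (Nat.ltb_spec (j - length m) (length l)).
      * split; [apply pts_app; left; split; auto| f_equal; lia].
      * apply pts_bound in Hq; simpl in Hq; lia.
Qed.

(** A bijection of the first blocks extends by the identity on a common tail. *)
Lemma equi_addr l m k : equi l m -> equi (l ++ k) (m ++ k).
Proof.
  intros [h [[Hpw [Hm Hi]] Hs]].
  set (g := fun p : pt X => (fst p - length l + length m, snd p)).
  exists (fun p => if excluded_middle_informative (fst p < length l) then h p else g p).
  assert (HL : forall i a, i < length l -> pts (l ++ k) (i, a) <-> pts l (i, a)).
  { intros i a Hi'. rewrite pts_app. split; [intros [[]|[]]; auto; lia| auto]. }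
  assert (HK : forall i a, length l <= i -> pts (l ++ k) (i, a) <-> pts k (i - length l, a)).
  { intros i a Hi'. rewrite pts_app. split; [intros [[]|[]]; auto; lia| auto]. }
  assert (HM : forall i a, i < length m -> pts (m ++ k) (i, a) <-> pts m (i, a)).
  { intros i a Hi'. rewrite pts_app. split; [intros [[]|[]]; auto; lia| auto]. }
  assert (HK' : forall i a, length m <= i -> pts (m ++ k) (i, a) <-> pts k (i - length m, a)).
  { intros i a Hi'. rewrite pts_app. split; [intros [[]|[]]; auto; lia| auto]. }
  assert (Hhead : forall i a, i < length l -> pts (l ++ k) (i, a) -> fst (h (i, a)) < length m).
  { intros i a Hi' Hp. apply (pts_bound m), Hm, HL; auto. }
  split; [split; [|split]|].
  - apply piecewise_if.
    + eapply piecewise_sub; [|exact Hpw]. intros [i a] [Hp Hc]; simpl in Hc. apply HL; auto.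
    + apply piecewise_reindex with (N := length (l ++ k)) (M := length (m ++ k)).
      intros [i a] [Hp Hc]. simpl in Hc |- *. assert (Hb := pts_bound _ _ Hp). split; auto.
      rewrite length_app in *. apply HK in Hp; [|lia]. apply pts_bound in Hp. simpl in Hp. lia.
  - intros [i a] Hp. simpl. destruct (excluded_middle_informative (i < length l)).
    + assert (Hl : pts l (i, a)) by (apply HL; auto). specialize (Hm _ Hl).
      destruct (h (i, a)) as [j b]. apply HM; [apply pts_bound in Hm|]; auto.
    + unfold g; simpl. apply HK'; [lia|].
      replace (i - length l + length m - length m) with (i - length l) by lia. apply HK; auto; lia.
  - intros [i a] [j b] Hp Hq. simpl.
    destruct (excluded_middle_informative (i < length l)),
             (excluded_middle_informative (j < length l)).
    + apply Hi; apply HL; auto.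
    + intros E. specialize (Hhead i a l0 Hp). rewrite E in Hhead. unfold g in Hhead; simpl in Hhead. lia.
    + intros E. specialize (Hhead j b l0 Hq). rewrite <- E in Hhead. unfold g in Hhead; simpl in Hhead. lia.
    + unfold g; simpl. intro E. injection E; intros; subst. f_equal; lia.
  - intros [j b] Hq. destruct (Nat.lt_ge_cases j (length m)).
    + apply HM in Hq; auto. destruct (Hs _ Hq) as [[i a] [Hp E]].
      exists (i, a). assert (Hb := pts_bound _ _ Hp). simpl in Hb. split; [apply HL; auto|].
      simpl. destruct (excluded_middle_informative (i < length l)); [auto| lia].
    + apply HK' in Hq; auto. exists (j - length m + length l, b). split.
      * apply HK; [lia|]. replace (j - length m + length l - length l) with (j - length m) by lia. auto.
      * simpl. destruct (excluded_middle_informative (j - length m + length l < length l)); [lia|].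
        unfold g; simpl. f_equal; lia.
Qed.

(** The generator [[A] = [alpha_s(A)]]: the single move [s] is a bijection. *)
Lemma equi_act s A : subset A (Dom alpha s) -> equi [A] [img alpha s A].
Proof.
  intro HA. assert (Hdom : forall a, A a -> rdom alpha s a) by (intros; apply (Dom_iff alpha), HA; auto).
  exists (fun p => (0, ra s (snd p))). split; [split; [|split]|].
  - exists [((s, 0), 0)]. intros [i a] Hp. apply pts_single in Hp as [-> Ha].
    exists ((s, 0), 0). simpl. split; auto. split; [split; auto| reflexivity].
  - intros [i a] Hp. apply pts_single in Hp as [-> Ha]. apply pts_single. split; auto. exists a; auto.
  - intros [i a] [j b] Hp Hq E. apply pts_single in Hp as [-> Ha], Hq as [-> Hb].
    injection E; intro E'. f_equal. eapply (ract_inj alpha); eauto.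
  - intros [j b] Hq. apply pts_single in Hq as [-> [a [Ha ->]]]. exists (0, a). split; auto.
Qed.

Lemma equi_union A B : disjoint A B -> equi [setU A B] [A; B].
Proof.
  intro HAB.
  exists (fun p => (if excluded_middle_informative (A (snd p)) then 0 else 1, snd p)).
  split; [split; [|split]|].
  - apply piecewise_reindex with (N := 1) (M := 2). intros [i a] Hp.
    apply pts_single in Hp as [-> _]. simpl. destruct (excluded_middle_informative (A a)); lia.
  - intros [i a] Hp. apply pts_single in Hp as [-> Ha]. simpl. apply pts_two.
    destruct (excluded_middle_informative (A a)); [left; auto| right]. destruct Ha; tauto.
  - intros [i a] [j b] Hp Hq E. apply pts_single in Hp as [-> Ha], Hq as [-> Hb].
    injection E; intros; subst; auto.
  - intros [j b] Hq. exists (0, b). apply pts_two in Hq. split.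
    + apply pts_single. split; auto. unfold setU; tauto.
    + simpl. destruct (excluded_middle_informative (A b)); destruct Hq as [[-> ?]|[-> ?]]; auto.
      * exfalso; eapply HAB; eauto.
      * tauto.
Qed.

Lemma equi_same_pts l m : (forall p, pts l p <-> pts m p) -> equi l m.
Proof.
  intro H. exists (fun p => p). apply PBij_id with (N := length l); [exact H| apply pts_bound].
Qed.

Lemma teq_equi l m : teq alpha l m -> equi l m.
Proof.
  induction 1.
  - apply equi_same_pts; tauto.
  - destruct IHteq as [h Hh]. exists (inv_on (pts l) h). apply PBij_inv; auto.
  - destruct IHteq1 as [h1 H1], IHteq2 as [h2 H2]. eexists. eapply PBij_comp; eauto.
  - apply equi_comm.
  - apply equi_addr; auto.
  - apply equi_same_pts. intros [i a]. rewrite !pts_single. specialize (H a). tauto.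
  - apply equi_same_pts. intros [i a]. rewrite pts_single. unfold pts, set0. destruct i; simpl; tauto.
  - apply equi_act; auto.
  - apply equi_union; auto.
Qed.

End TeqToEqui.

Lemma perm_filter_split A (f : A -> bool) l :
  Permutation l (filter f l ++ filter (fun x => negb (f x)) l).
Proof.
  induction l; simpl; auto. destruct (f a); simpl.
  - constructor; auto.
  - apply Permutation_cons_app; auto.
Qed.

Section EquiToTeq.
Variables (Sg : InvSemigroup) (X : Type) (alpha : Rep Sg X).
Notation ra := (ract alpha).
Notation teq := (teq alpha).

Lemma teq_pieces l : forall ks (c : pt X -> nat) (src : nat -> nat), NoDup ks ->
  (forall p, pts l p -> In (c p) ks /\ fst p = src (c p)) ->
  teq l (map (fun k a => pts l (src k, a) /\ c (src k, a) = k) ks).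
Proof.
  induction l as [|A l IH]; intros ks c src Hnd Hc.
  - apply teq_all_empty. intros k a _ [H _]. unfold pts in H; simpl in H. destruct (src k); exact H.
  - set (F := fun k a => pts (A :: l) (src k, a) /\ c (src k, a) = k).
    set (z := fun k => Nat.eqb (src k) 0).
    apply teq_trans with (map F (filter z ks ++ filter (fun x => negb (z x)) ks)).
    2:{ apply teq_perm, Permutation_map, Permutation_sym, perm_filter_split. }
    rewrite map_app. apply (teq_app (l := [A]) (m := l)).
    + eapply teq_trans; [apply (teq_partition_by alpha (fun a => c (0, a)) (ks := filter z ks))|].
      * apply NoDup_filter; auto.
      * intros a Ha. destruct (Hc (0, a)) as [H1 H2]; [exact Ha|]. apply filter_In. split; auto.
        unfold z. rewrite <- H2. reflexivity.
      * apply teq_map_ext. intros k Hk a. apply filter_In in Hk as [_ Hk]. unfold z in Hk.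
        apply Nat.eqb_eq in Hk. unfold F. rewrite Hk. unfold pts; simpl. tauto.
    + eapply teq_trans;
        [apply (IH (filter (fun x => negb (z x)) ks) (fun p => c (S (fst p), snd p)) (fun k => pred (src k)))|].
      * apply NoDup_filter; auto.
      * intros [i a] Hp. destruct (Hc (S i, a)) as [H1 H2]; [exact Hp|]. simpl in *.
        split; [|rewrite <- H2; reflexivity]. apply filter_In. split; auto. unfold z. rewrite <- H2. reflexivity.
      * apply teq_map_ext. intros k Hk a. apply filter_In in Hk as [_ Hk]. unfold z in Hk.
        unfold F. simpl. destruct (src k) as [|j]; [discriminate|]. unfold pts; simpl. tauto.
Qed.

Definition default_move : move Sg := ((isg_one Sg, 0), 0).

Lemma piecewise_labelling P h : piecewise alpha P h ->
  exists (ms : list (move Sg)) (c : pt X -> nat), forall p, P p ->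
    c p < length ms /\ applicable alpha (nth (c p) ms default_move) p /\
    h p = apply_move alpha (nth (c p) ms default_move) p.
Proof.
  intros [ms Hms].
  set (Q := fun p k => k < length ms /\ applicable alpha (nth k ms default_move) p /\
                       h p = apply_move alpha (nth k ms default_move) p).
  exists ms, (fun p => match excluded_middle_informative (exists k, Q p k) with
    | left H => proj1_sig (constructive_indefinite_description _ H) | right _ => 0 end).
  intros p Hp. destruct (excluded_middle_informative (exists k, Q p k)) as [H|H].
  - exact (proj2_sig (constructive_indefinite_description _ H)).
  - exfalso; apply H. destruct (Hms p Hp) as [m [Im [Om Em]]].
    apply In_nth with (d := default_move) in Im as [k [Hk Ek]]. exists k. unfold Q; rewrite Ek; auto.
Qed.

Lemma equi_teq l m : equi alpha l m -> teq l m.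
Proof.
  intros [h [[Hpw [Hm Hi]] Hs]].
  destruct (piecewise_labelling Hpw) as [ms [c Hc]].
  set (ks := seq 0 (length ms)).
  set (src := fun k => snd (fst (nth k ms default_move))).
  set (tgt := fun k => snd (nth k ms default_move)).
  set (sk := fun k => fst (fst (nth k ms default_move))).
  set (g := inv_on (pts l) h).
  assert (Hnd : NoDup ks) by apply seq_NoDup.
  (* Cut [l] by the label of a point and [m] by the label of its preimage. *)
  eapply teq_trans; [apply (teq_pieces l c src Hnd)|].
  { intros p Hp. destruct (Hc p Hp) as [H1 [[H2 _] _]]. split; [apply in_seq; lia| exact H2]. }
  apply teq_sym.
  eapply teq_trans; [apply (teq_pieces m (fun q => c (g q)) tgt Hnd)|].
  { intros q Hq. destruct (Hs q Hq) as [p [Hp <-]]. unfold g. rewrite inv_on_h by auto.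
    destruct (Hc p Hp) as [H1 [_ H3]]. split; [apply in_seq; lia|]. rewrite H3. reflexivity. }
  (* Corresponding pieces differ by the single move [sk k]. *)
  apply teq_sym. apply teq_map_pointwise. intros k Hk.
  set (Pl := fun a => pts l (src k, a) /\ c (src k, a) = k).
  apply teq_trans with [img alpha (sk k) Pl].
  - apply teq_act. intros a [Ha Hca]. apply (Dom_iff alpha).
    destruct (Hc _ Ha) as [_ [[_ H] _]]. rewrite Hca in H. exact H.
  - apply teq_ext. intro b. split.
    + intros [a [[Ha Hca] ->]]. destruct (Hc _ Ha) as [_ [_ E]]. rewrite Hca in E.
      assert (E' : h (src k, a) = (tgt k, ra (sk k) a)) by (rewrite E; reflexivity).
      rewrite <- E'. split; [apply Hm; auto|]. unfold g; rewrite inv_on_h by auto. exact Hca.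
    + intros [Hb Hcb]. destruct (Hs _ Hb) as [[i a] [Hp E]]. unfold g in Hcb. rewrite <- E in Hcb.
      rewrite inv_on_h in Hcb by auto. destruct (Hc _ Hp) as [_ [[Hsrc _] E2]].
      rewrite Hcb in Hsrc, E2. simpl in Hsrc. subst i. exists a. split; [split; auto|].
      rewrite E2 in E. unfold apply_move in E. injection E; intros; auto.
Qed.

End EquiToTeq.

(** Schröder–Bernstein for piecewise injections: with [f : P -> Q] and
    [g : Q -> P], use [f] on the points of [P] reached from [P \ g(Q)] by
    iterating [g o f], and [g^-1] elsewhere. *)
Section SchroederBernstein.
Variables (Sg : InvSemigroup) (X : Type) (alpha : Rep Sg X).
Variables (P Q : pt X -> Prop) (f g : pt X -> pt X).
Hypotheses (Hf : PInj alpha P Q f) (Hg : PInj alpha Q P g).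

Inductive sb_chain : pt X -> Prop :=
| sb_start p : P p -> ~ (exists q, Q q /\ g q = p) -> sb_chain p
| sb_next p : sb_chain p -> sb_chain (g (f p)).

Lemma sb_chain_P p : sb_chain p -> P p.
Proof. destruct Hf as [_ [mf _]], Hg as [_ [mg _]]. induction 1; auto. Qed.

Lemma schroeder_bernstein : exists h, PBij alpha P Q h.
Proof.
  destruct Hf as [pf [mf jf]], Hg as [pg [mg jg]].
  exists (fun p => if excluded_middle_informative (sb_chain p) then f p else inv_on Q g p).
  assert (Hinv : forall p, P p -> ~ sb_chain p -> Q (inv_on Q g p) /\ g (inv_on Q g p) = p).
  { intros p Hp Hn. apply inv_on_spec. apply NNPP. intro H. apply Hn, sb_start; auto. }
  split; [split; [|split]|].
  - apply piecewise_if.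
    + eapply piecewise_sub; [|exact pf]. intros p []; auto.
    + eapply piecewise_sub; [|apply piecewise_inv; eauto]. intros p [Hp Hn].
      exists (inv_on Q g p). apply Hinv; auto.
  - intros p Hp. destruct (excluded_middle_informative (sb_chain p)); auto. apply Hinv; auto.
  - intros p q Hp Hq.
    destruct (excluded_middle_informative (sb_chain p)) as [cp|cp],
             (excluded_middle_informative (sb_chain q)) as [cq|cq]; intro E.
    + apply jf; auto.
    + exfalso. apply cq. rewrite <- (proj2 (Hinv q Hq cq)), <- E. apply sb_next; auto.
    + exfalso. apply cp. rewrite <- (proj2 (Hinv p Hp cp)), E. apply sb_next; auto.
    + rewrite <- (proj2 (Hinv p Hp cp)), <- (proj2 (Hinv q Hq cq)), E. reflexivity.
  - intros q Hq. destruct (excluded_middle_informative (sb_chain (g q))) as [c|c].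
    + remember (g q) as r eqn:Er. destruct c as [r Hr Hn|p' Hp'].
      * exfalso. apply Hn. eauto.
      * assert (HP' := sb_chain_P Hp'). assert (q = f p') by (apply jg; auto).
        subst q. exists p'. split; auto.
        destruct (excluded_middle_informative (sb_chain p')); [auto| contradiction].
    + exists (g q). split; auto.
      destruct (excluded_middle_informative (sb_chain (g q))); [contradiction|].
      apply inv_on_h; auto.
Qed.

End SchroederBernstein.

Section Antisymmetry.
Variables (Sg : InvSemigroup) (X : Type) (alpha : Rep Sg X).

Lemma tle_PInj x y : tle alpha x y -> exists h, PInj alpha (pts x) (pts y) h.
Proof.
  intros [z Hz]. apply teq_equi in Hz as [h [[Hpw [Hm Hi]] _]]. exists h.
  assert (Hx : forall p, pts x p -> pts (x ++ z) p).
  { intros [i a] Hp. apply pts_app. left. split; auto. apply (pts_bound _ _ Hp). }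
  split; [|split].
  - eapply piecewise_sub; [|exact Hpw]. exact Hx.
  - intros; apply Hm, Hx; auto.
  - intros; apply Hi; auto.
Qed.

Lemma teq_of_PInj x y h1 h2 :
  PInj alpha (pts x) (pts y) h1 -> PInj alpha (pts y) (pts x) h2 -> teq alpha x y.
Proof.
  intros H1 H2. destruct (schroeder_bernstein H1 H2) as [h Hh]. apply equi_teq. exists h; auto.
Qed.

Lemma tle_antisym x y : tle alpha x y -> tle alpha y x -> teq alpha x y.
Proof.
  intros H1 H2. destruct (tle_PInj H1) as [h1 ?], (tle_PInj H2) as [h2 ?].
  eapply teq_of_PInj; eauto.
Qed.

End Antisymmetry.

Section Paradoxical.
Variables (Sg : InvSemigroup) (X : Type) (alpha : Rep Sg X).
Notation rd := (rdom alpha).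
Notation ra := (ract alpha).
Notation teq := (teq alpha).

Lemma bigunion_map (F : nat -> set X) l x :
  bigunion (map F l) x <-> exists k, In k l /\ F k x.
Proof.
  unfold bigunion. split.
  - intros [B [HB Hx]]. apply in_map_iff in HB as [k [<- Hk]]. eauto.
  - intros [k [Hk Hx]]. exists (F k). split; auto. apply in_map; auto.
Qed.

Lemma pairwise_disjoint_map (F : nat -> set X) ks : NoDup ks ->
  (forall k k', In k ks -> In k' ks -> k <> k' -> disjoint (F k) (F k')) ->
  pairwise_disjoint (map F ks).
Proof.
  intros Hnd HF i j Hi Hj Hij. rewrite length_map in Hi, Hj.
  rewrite (nth_indep _ set0 (F 0)) by (rewrite length_map; auto).
  rewrite (nth_indep _ set0 (F 0) (n := j)) by (rewrite length_map; auto).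
  rewrite !map_nth. apply HF; try (apply nth_In; auto).
  intro E. apply Hij. eapply NoDup_nth; eauto.
Qed.

Lemma teq_images (As : list (set X * Sg)) :
  (forall p, In p As -> subset (fst p) (Dom alpha (snd p))) ->
  teq (map (fun p => img alpha (snd p) (fst p)) As) (map fst As).
Proof.
  induction As; simpl; intros H; [apply teq_refl|].
  apply teq_cons; auto. apply teq_sym, teq_act. auto.
Qed.

(** A paradoxical decomposition exhibits [2 [A]] as a part of [[A]]. *)
Lemma paradoxical_double A : paradoxical alpha A -> teq [A] [A; A].
Proof.
  intros [As [Bs [HA [HB [HdA [HsA [HdB [HsB [Hd Hsub]]]]]]]]].
  set (F := map fst As ++ map fst Bs).
  set (R := fun a => A a /\ ~ bigunion F a).
  assert (HAFR : teq [A] (F ++ [R])).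
  { apply teq_trans with [setU (bigunion F) R].
    - apply teq_ext. intro a. unfold setU, R. split; [tauto|].
      intros [H|H]; [apply Hsub; auto| tauto].
    - eapply teq_trans; [apply teq_union; intros a H [_ H']; auto|].
      apply (teq_app (l := [bigunion F]) (m := [R])); [|apply teq_refl].
      apply teq_disjoint_union; auto. intro; tauto. }
  assert (HAs : teq [A] (map fst As)).
  { eapply teq_trans; [apply (teq_disjoint_union alpha HdA HsA)| apply teq_images; auto]. }
  assert (HBs : teq [A] (map fst Bs)).
  { eapply teq_trans; [apply (teq_disjoint_union alpha HdB HsB)| apply teq_images; auto]. }
  apply tle_antisym.
  - exists [A]. apply teq_refl.
  - exists [R]. apply teq_sym. eapply teq_trans; [exact HAFR|].
    unfold F. rewrite <- app_assoc.
    apply (teq_app (l := map fst As) (l' := [A])); [apply teq_sym; exact HAs|].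
    apply (teq_app (l := map fst Bs) (l' := [A])); [apply teq_sym; exact HBs| apply teq_refl].
Qed.

(** Conversely, cut [A] along the moves of a piecewise bijection
    [h : pts [A] -> pts [A; A]]: the pieces sent to the first copy and those
    sent to the second copy form the two halves of a paradoxical decomposition. *)
Section FromBijection.
Variables (A : set X) (h : pt X -> pt X) (ms : list (move Sg)) (c : pt X -> nat).
Hypothesis (Hh : PBij alpha (pts [A]) (pts [A; A]) h).
Hypothesis (Hc : forall p, pts [A] p -> c p < length ms /\
  applicable alpha (nth (c p) ms (default_move Sg)) p /\
  h p = apply_move alpha (nth (c p) ms (default_move Sg)) p).

Let tgt k := snd (nth k ms (default_move Sg)).
Let act k := fst (fst (nth k ms (default_move Sg))).
Definition piece k a := A a /\ c (0, a) = k.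
Let image k := img alpha (act k) (piece k).
Let labels_to j := filter (fun k => Nat.eqb (tgt k) j) (seq 0 (length ms)).

Lemma piece_move a : A a ->
  h (0, a) = (tgt (c (0, a)), ra (act (c (0, a))) a) /\ rd (act (c (0, a))) a /\ c (0, a) < length ms.
Proof. intro Ha. destruct (Hc (0, a)) as [H1 [[_ H2] H3]]; [apply pts_single; auto|]. auto. Qed.

Lemma piece_dom k : subset (piece k) (Dom alpha (act k)).
Proof.
  intros a [Ha Ea]. apply (Dom_iff alpha). destruct (piece_move Ha) as [_ [H _]].
  rewrite Ea in H; auto.
Qed.

(** Pieces sent to the same copy have disjoint images, by injectivity of [h]. *)
Lemma images_disjoint j : pairwise_disjoint (map image (labels_to j)).
Proof.
  apply pairwise_disjoint_map; [apply NoDup_filter, seq_NoDup|].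
  intros k k' Hk Hk' Hkk b [a [[Ha Ea] ->]] [a' [[Ha' Ea'] E]].
  apply filter_In in Hk as [_ Hk], Hk' as [_ Hk']. apply Nat.eqb_eq in Hk, Hk'.
  destruct Hh as [[_ [_ Hi]] _].
  assert (Hp : forall a, A a -> pts [A] (0, a)) by (intros; apply pts_single; auto).
  assert (Haa : h (0, a) = h (0, a')).
  { destruct (piece_move Ha) as [E1 _], (piece_move Ha') as [E2 _].
    rewrite E1, E2, Ea, Ea', Hk, Hk', E. reflexivity. }
  apply Hi in Haa; auto. injection Haa; intros; subst. congruence.
Qed.

(** The pieces sent to copy [j] cover that copy, by surjectivity of [h]. *)
Lemma images_cover j : j < 2 -> seteq A (bigunion (map image (labels_to j))).
Proof.
  intros Hj b. rewrite bigunion_map. destruct Hh as [[_ [Hm _]] Hs]. split.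
  - intro Hb. assert (Hq : pts [A; A] (j, b)) by (apply pts_two; destruct j as [|[|]]; auto; lia).
    destruct (Hs _ Hq) as [[i a] [Hp E]]. apply pts_single in Hp as [-> Ha].
    destruct (piece_move Ha) as [E1 [_ Hlt]]. rewrite E1 in E. injection E; intros E2 E3.
    exists (c (0, a)). split.
    + apply filter_In. split; [apply in_seq; lia|]. rewrite E3. apply Nat.eqb_refl.
    + exists a. split; [split; auto| auto].
  - intros [k [Hk [a [[Ha Ea] ->]]]]. apply filter_In in Hk as [_ Hk]. apply Nat.eqb_eq in Hk.
    destruct (piece_move Ha) as [E1 _].
    assert (H' := Hm _ (proj2 (pts_single _ _ _) (conj eq_refl Ha))).
    rewrite E1, Ea, Hk in H'. apply pts_two in H'. destruct H' as [[_ ?]|[_ ?]]; auto.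
Qed.

Lemma pieces_disjoint :
  pairwise_disjoint (map piece (labels_to 0) ++ map piece (labels_to 1)).
Proof.
  rewrite <- map_app. apply pairwise_disjoint_map.
  - apply NoDup_app; try apply NoDup_filter, seq_NoDup.
    intros k H0 H1. apply filter_In in H0 as [_ H0], H1 as [_ H1].
    apply Nat.eqb_eq in H0, H1. congruence.
  - intros k k' _ _ Hkk a [_ E1] [_ E2]. congruence.
Qed.

Lemma bijection_paradoxical : paradoxical alpha A.
Proof.
  exists (map (fun k => (piece k, act k)) (labels_to 0)),
         (map (fun k => (piece k, act k)) (labels_to 1)).
  rewrite !map_map. simpl.
  split; [|split; [|split; [|split; [|split; [|split; [|split]]]]]].
  - intros p Hp. apply in_map_iff in Hp as [k [<- _]]. apply piece_dom.
  - intros p Hp. apply in_map_iff in Hp as [k [<- _]]. apply piece_dom.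
  - apply images_disjoint.
  - apply images_cover; lia.
  - apply images_disjoint.
  - apply images_cover; lia.
  - apply pieces_disjoint.
  - intros a Ha. rewrite <- map_app in Ha. apply bigunion_map in Ha as [k [_ [Ha _]]]. auto.
Qed.

End FromBijection.

Lemma double_paradoxical A : teq [A] [A; A] -> paradoxical alpha A.
Proof.
  intro H. apply teq_equi in H as [h Hh].
  destruct (piecewise_labelling (proj1 (proj1 Hh))) as [ms [c Hc]].
  eapply bijection_paradoxical; [exact Hh| exact Hc].
Qed.

End Paradoxical.

(** Cardinalities of finite lists up to repetition, over any type (equality
    is decided classically). *)
Definition eqd {T : Type} (x y : T) : {x = y} + {x <> y} := excluded_middle_informative (x = y).
Definition bool_of (P : Prop) : bool := if excluded_middle_informative P then true else false.

Lemma bool_of_true P : bool_of P = true <-> P.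
Proof. unfold bool_of. destruct (excluded_middle_informative P); split; auto; discriminate. Qed.

Section Card.
Variable T : Type.
Definition card (l : list T) := length (nodup eqd l).
Definition inter (A B : list T) := filter (fun x => bool_of (In x B)) A.

Lemma card_cons a l : card (a :: l) = if in_dec eqd a l then card l else S (card l).
Proof. unfold card; simpl. destruct (in_dec eqd a l); reflexivity. Qed.

Lemma card_incl l1 l2 : incl l1 l2 -> card l1 <= card l2.
Proof.
  intro H. apply NoDup_incl_length; [apply NoDup_nodup|].
  intros x Hx. apply nodup_In. apply nodup_In in Hx. auto.
Qed.

Lemma card_cons_le a l : card (a :: l) <= S (card l).
Proof. rewrite card_cons; destruct (in_dec eqd a l); lia. Qed.

Lemma card_not_in a l : ~ In a l -> card (a :: l) = S (card l).
Proof. intro H. rewrite card_cons. destruct (in_dec eqd a l); tauto. Qed.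

Lemma In_inter x A B : In x (inter A B) <-> In x A /\ In x B.
Proof. unfold inter. rewrite filter_In, bool_of_true. tauto. Qed.

Lemma card_union_inter A B : card (A ++ B) + card (inter A B) = card A + card B.
Proof.
  induction A as [|a A IH]; simpl.
  - unfold inter, card; simpl; lia.
  - rewrite card_cons. unfold inter at 1; simpl. fold (inter A B).
    rewrite (card_cons a A).
    destruct (in_dec eqd a (A ++ B)) as [H1|H1], (in_dec eqd a A) as [H2|H2];
    unfold bool_of; destruct (excluded_middle_informative (In a B)) as [H3|H3];
    try rewrite card_cons;
    try destruct (in_dec eqd a (inter A B)) as [H4|H4]; try rewrite In_inter in H4;
    try (apply in_app_or in H1); try (rewrite in_app_iff in H1); try tauto; lia.
Qed.

End Card.

(** Hall's marriage theorem for a locally finite bipartite graph, whose left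
    vertices are the [u] with [PU u] and where [u] is adjacent to the [n]
    right vertices [nb u r], [r < n].  The matching is built greedily along an
    exhaustion of each connected component (which is countable) by balls,
    each step preserving Hall's condition for the remaining vertices. *)
Section Hall.
Variables (U V : Type) (n : nat) (PU : U -> Prop) (nb : U -> nat -> V).

Definition neigh (W : list U) : list V := flat_map (fun u => map (nb u) (seq 0 n)) W.
Definition free_neigh (Us : V -> Prop) (W : list U) : list V :=
  filter (fun v => negb (bool_of (Us v))) (neigh W).
Definition Hall (D : U -> Prop) (Us : V -> Prop) :=
  forall W, (forall u, In u W -> PU u /\ ~ D u) -> card W <= card (free_neigh Us W).
(** [W] is tight when Hall's inequality is an equality. *)
Definition tight Us W := card (free_neigh Us W) <= card W.

Lemma In_neigh v W : In v (neigh W) <-> exists u r, In u W /\ r < n /\ nb u r = v.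
Proof.
  unfold neigh. rewrite in_flat_map. split.
  - intros [u [Hu Hv]]. apply in_map_iff in Hv as [r [E Hr]]. apply in_seq in Hr.
    exists u, r; split; auto; split; auto; lia.
  - intros [u [r [Hu [Hr E]]]]. exists u. split; auto. apply in_map_iff. exists r.
    split; auto. apply in_seq; lia.
Qed.

Lemma In_free_neigh Us v W : In v (free_neigh Us W) <-> In v (neigh W) /\ ~ Us v.
Proof.
  unfold free_neigh. rewrite filter_In. unfold bool_of.
  destruct (excluded_middle_informative (Us v)); simpl; intuition discriminate.
Qed.

Lemma free_neigh_app Us W1 W2 : free_neigh Us (W1 ++ W2) = free_neigh Us W1 ++ free_neigh Us W2.
Proof. unfold free_neigh, neigh. rewrite flat_map_app, filter_app. reflexivity. Qed.

Lemma Hall_ext D D' Us Us' : (forall w, D w -> D' w) -> (forall v, Us v <-> Us' v) ->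
  Hall D Us -> Hall D' Us'.
Proof.
  intros HD HU H W HW. eapply Nat.le_trans; [apply H|].
  - intros u Hu. destruct (HW u Hu). split; auto.
  - apply card_incl. intros v Hv. apply In_free_neigh in Hv as [H1 H2].
    apply In_free_neigh. split; auto. rewrite <- HU; auto.
Qed.

(** Under Hall's condition, tight sets are closed under union (submodularity
    of the neighbourhood size). *)
Lemma tight_app D Us W1 W2 : Hall D Us ->
  (forall u, In u W1 -> PU u /\ ~ D u) -> (forall u, In u W2 -> PU u /\ ~ D u) ->
  tight Us W1 -> tight Us W2 -> tight Us (W1 ++ W2).
Proof.
  unfold tight. intros HH H1 H2 C1 C2. rewrite free_neigh_app.
  assert (Hi : card (inter W1 W2) <= card (inter (free_neigh Us W1) (free_neigh Us W2))).
  { eapply Nat.le_trans; [apply HH|].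
    - intros u Hu. apply In_inter in Hu as [Hu _]. auto.
    - apply card_incl. intros v Hv. rewrite In_free_neigh, In_neigh in Hv.
      destruct Hv as [[u [r [Hu [Hr E]]]] Hn].
      apply In_inter in Hu as [Hu1 Hu2]. apply In_inter.
      split; apply In_free_neigh; split; auto; apply In_neigh; eauto. }
  assert (M1 := card_union_inter (free_neigh Us W1) (free_neigh Us W2)).
  assert (M2 := card_union_inter W1 W2). lia.
Qed.

Lemma tight_concat D Us Ws : Hall D Us ->
  (forall W, In W Ws -> (forall u, In u W -> PU u /\ ~ D u) /\ tight Us W) ->
  tight Us (concat Ws).
Proof.
  intro HH. induction Ws as [|W Ws IH]; simpl; intros H.
  - unfold tight, free_neigh, neigh, card. simpl. lia.
  - apply tight_app with D; auto.
    + apply H; auto.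
    + intros u Hu. apply in_concat in Hu as [W' [HW' Hu]]. apply (H W'); auto.
    + apply H; auto.
Qed.

Lemma blocking_set D Us u r : Hall D Us -> ~ Us (nb u r) ->
  ~ Hall (fun w => D w \/ w = u) (fun v => Us v \/ v = nb u r) ->
  exists W, (forall w, In w W -> PU w /\ ~ D w /\ w <> u) /\
    tight Us W /\ In (nb u r) (free_neigh Us W).
Proof.
  intros HH Hus Hn. set (Us' := fun v => Us v \/ v = nb u r) in Hn.
  apply not_all_ex_not in Hn as [W HW]. apply imply_to_and in HW as [HW1 HW2].
  assert (HW : forall w, In w W -> PU w /\ ~ D w /\ w <> u).
  { intros w Hw. destruct (HW1 w Hw). split; auto. }
  assert (Hle : card W <= card (free_neigh Us W)).
  { apply HH. intros w Hw. destruct (HW w Hw) as [? [? _]]; auto. }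
  assert (Hinc : incl (free_neigh Us W) (nb u r :: free_neigh Us' W)).
  { intros v Hv. rewrite In_free_neigh in Hv. destruct (eqd v (nb u r)) as [->|Hne]; [left; auto| right].
    apply In_free_neigh. split; [tauto|]. unfold Us'. intros [?|?]; tauto. }
  assert (C1 := card_incl Hinc). assert (C2 := card_cons_le (nb u r) (free_neigh Us' W)).
  exists W. split; [exact HW| split; [unfold tight; lia|]].
  apply NNPP. intro Hnot.
  assert (Hinc2 : incl (free_neigh Us W) (free_neigh Us' W)).
  { intros v Hv. rewrite In_free_neigh in Hv. apply In_free_neigh. split; [tauto|].
    unfold Us'. intros [?|E]; [tauto| subst; apply Hnot, In_free_neigh; tauto]. }
  assert (C3 := card_incl Hinc2). lia.
Qed.

(** Otherwise the union of the
    blocking sets of all its free neighbours is tight, and adding [u] to it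
    violates Hall's condition. *)
Lemma extend_matching D Us u : Hall D Us -> PU u -> ~ D u ->
  exists r, r < n /\ ~ Us (nb u r) /\
    Hall (fun w => D w \/ w = u) (fun v => Us v \/ v = nb u r).
Proof.
  intros HH Hu Hdu. apply NNPP. intro Hno.
  set (Pr := fun r (W : list U) => (forall w, In w W -> PU w /\ ~ D w /\ w <> u) /\
     tight Us W /\ (r < n -> ~ Us (nb u r) -> In (nb u r) (free_neigh Us W))).
  assert (Hex : forall r, exists W, Pr r W).
  { intro r. destruct (classic (r < n /\ ~ Us (nb u r))) as [[Hr Hus]|Hr].
    - destruct (@blocking_set D Us u r HH Hus) as [W HW]; [intro; apply Hno; eauto|].
      destruct HW as [HW1 [HW2 HW3]]. exists W. split; [exact HW1| split; [exact HW2| auto]].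
    - exists []. split; [simpl; tauto| split; [unfold tight, free_neigh, neigh, card; simpl; lia|]].
      intros; exfalso; tauto. }
  set (f := fun r => proj1_sig (constructive_indefinite_description _ (Hex r))).
  assert (Hf : forall r, Pr r (f r)) by (intro r; apply proj2_sig).
  set (Wall := concat (map f (seq 0 n))).
  assert (HWall : forall w, In w Wall -> PU w /\ ~ D w /\ w <> u).
  { intros w Hw. apply in_concat in Hw as [W [HW Hw]]. apply in_map_iff in HW as [r [<- _]].
    apply (Hf r); auto. }
  assert (Cr : tight Us Wall).
  { apply tight_concat with D; auto. intros W HW. apply in_map_iff in HW as [r [<- _]].
    split; [intros w Hw; destruct (proj1 (Hf r) w Hw) as [? [? _]]; auto| apply Hf]. }
  assert (Hsub : incl (free_neigh Us (u :: Wall)) (free_neigh Us Wall)).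
  { intros v Hv. apply In_free_neigh in Hv as [Hv Hn]. apply In_neigh in Hv as [w [r [Hw [Hr E]]]].
    destruct Hw as [<-|Hw].
    - subst v. assert (Hin := proj2 (proj2 (Hf r)) Hr Hn). apply In_free_neigh in Hin as [Hin _].
      apply In_free_neigh; split; auto. apply In_neigh in Hin as [w' [r' [Hw' [Hr' E']]]].
      apply In_neigh. exists w', r'. split; auto. apply in_concat. exists (f r). split; auto.
      apply in_map, in_seq; lia.
    - apply In_free_neigh. split; auto. apply In_neigh; eauto. }
  assert (Hnot : ~ In u Wall) by (intro H; destruct (HWall u H) as [_ [_ ?]]; auto).
  assert (Hall_u : card (u :: Wall) <= card (free_neigh Us (u :: Wall))).
  { apply HH. intros w [<-|Hw]; [auto|]. destruct (HWall w Hw) as [? [? _]]; auto. }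
  rewrite (@card_not_in _ u Wall Hnot) in Hall_u.
  assert (C1 := card_incl Hsub). unfold tight in Cr. lia.
Qed.

Record pmatch := mk_pmatch { matched : U -> Prop; mate : U -> nat }.
Definition used (s : pmatch) : V -> Prop := fun v => exists w, matched s w /\ nb w (mate s w) = v.
Definition valid (s : pmatch) :=
  (forall w, matched s w -> PU w /\ mate s w < n) /\
  (forall w w', matched s w -> matched s w' -> nb w (mate s w) = nb w' (mate s w') -> w = w') /\
  Hall (matched s) (used s).

Definition can_extend (s : pmatch) (u : U) (r : nat) :=
  PU u /\ ~ matched s u /\ valid s /\ r < n /\ ~ used s (nb u r) /\
  Hall (fun w => matched s w \/ w = u) (fun v => used s v \/ v = nb u r).

Definition extend (s : pmatch) (u : U) : pmatch :=
  match excluded_middle_informative (exists r, can_extend s u r) with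
  | left H => let r := proj1_sig (constructive_indefinite_description _ H) in
      mk_pmatch (fun w => matched s w \/ w = u) (fun w => if eqd w u then r else mate s w)
  | right _ => s end.

Lemma extend_mono s u w : matched s w -> matched (extend s u) w /\ mate (extend s u) w = mate s w.
Proof.
  intro H. unfold extend. destruct (excluded_middle_informative _) as [E|E]; [|auto].
  destruct (constructive_indefinite_description _ E) as [r Hr]; simpl.
  split; [left; auto|]. destruct (eqd w u) as [->|]; auto. destruct Hr as [_ [Hn _]]; contradiction.
Qed.

(** Extending preserves validity: the new partner is a free vertex, and
    [can_extend] guarantees Hall's condition. *)
Lemma extend_valid s u : valid s -> valid (extend s u).
Proof.
  intro HI. unfold extend. destruct (excluded_middle_informative _) as [E|E]; [|auto].
  destruct (constructive_indefinite_description _ E) as [r Hr0]; simpl.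
  destruct Hr0 as [Hu [Hdu [_ [Hr [Hus HH]]]]].
  destruct HI as [I1 [I2 I3]].
  split; [|split].
  - intros w Hw. simpl in Hw |- *. destruct (eqd w u) as [->|Hne]; [split; auto|].
    destruct Hw as [Hw|]; [apply I1; auto| congruence].
  - intros w w' Hw Hw'. simpl in Hw, Hw' |- *. destruct (eqd w u) as [->|Hne], (eqd w' u) as [->|Hne']; auto.
    + destruct Hw' as [Hw'|]; [|congruence]. intro Ee. exfalso. apply Hus. exists w'. split; auto.
    + destruct Hw as [Hw|]; [|congruence]. intro Ee. exfalso. apply Hus. exists w. split; auto.
    + destruct Hw as [Hw|]; [|congruence]. destruct Hw' as [Hw'|]; [|congruence]. apply I2; auto.
  - eapply Hall_ext; [| |exact HH]; [intros; auto|].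
    intro v. unfold used; simpl. split.
    + intros [[w [Hw Ev]]|Ev].
      * exists w. split; auto. destruct (eqd w u) as [->|]; auto. exfalso; apply Hdu; auto.
      * exists u. split; auto. destruct (eqd u u); [auto|congruence].
    + intros [w [[Hw| ->] Ev]].
      * left. exists w. split; auto. destruct (eqd w u) as [->|]; auto. exfalso; apply Hdu; auto.
      * right. destruct (eqd u u); [auto|congruence].
Qed.

Lemma extend_covers s u : valid s -> PU u -> matched (extend s u) u.
Proof.
  intros HI Hu. destruct (classic (matched s u)) as [H|H]; [apply extend_mono; auto|].
  unfold extend. destruct (excluded_middle_informative _) as [E|E].
  - destruct (constructive_indefinite_description _ E); simpl; right; reflexivity.
  - exfalso. apply E. destruct (extend_matching (proj2 (proj2 HI)) Hu H) as [r Hr].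
    exists r. unfold can_extend; tauto.
Qed.

Definition run (s : pmatch) (l : list U) : pmatch := fold_left extend l s.

Lemma run_valid l : forall s, valid s -> valid (run s l).
Proof. induction l; simpl; auto. intros s H. apply IHl, extend_valid; auto. Qed.

Lemma run_mono l : forall s w, matched s w -> matched (run s l) w /\ mate (run s l) w = mate s w.
Proof.
  induction l; simpl; auto. intros s w H. destruct (extend_mono s a w H) as [H1 H2].
  destruct (IHl _ _ H1) as [H3 H4]. split; auto. congruence.
Qed.

Lemma run_covers l : forall s u, valid s -> In u l -> PU u -> matched (run s l) u.
Proof.
  induction l as [|a l IH]; simpl; intros s u HI Hin Hu; [contradiction|].
  destruct Hin as [<-|Hin].
  - apply run_mono. apply extend_covers; auto.
  - apply IH; auto. apply extend_valid; auto.
Qed.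

Variable nbl : U -> list U.
Definition adj u u' := PU u /\ PU u' /\ exists r r', r < n /\ r' < n /\ nb u r = nb u' r'.
Hypothesis Hnbl : forall u u', adj u u' -> In u' (nbl u).
Hypothesis Hall0 : Hall (fun _ => False) (fun _ => False).

Fixpoint ball (w : U) (k : nat) : list U :=
  match k with 0 => [w] | S k => ball w k ++ flat_map nbl (ball w k) end.

Definition empty_pmatch := mk_pmatch (fun _ => False) (fun _ => 0).

Lemma valid_empty : valid empty_pmatch.
Proof.
  split; [simpl; tauto| split; [simpl; tauto|]].
  eapply Hall_ext; [| |exact Hall0]; auto. intro v. unfold used; simpl. split; [tauto| intros [? []]; tauto].
Qed.

(** Stage [k] of the matching of the component of [w]: all vertices of the
    ball of radius [k - 1] are matched. *)
Fixpoint stage (w : U) (k : nat) : pmatch :=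
  match k with 0 => empty_pmatch | S k => run (stage w k) (ball w k) end.

Lemma stage_valid w k : valid (stage w k).
Proof. induction k; simpl; [apply valid_empty| apply run_valid; auto]. Qed.

Lemma stage_mono w k k' u : k <= k' -> matched (stage w k) u ->
  matched (stage w k') u /\ mate (stage w k') u = mate (stage w k) u.
Proof.
  induction 1; [auto|]. intro H0. destruct (IHle H0) as [H1 H2]. simpl.
  destruct (run_mono (ball w m) _ _ H1) as [H3 H4]. split; auto. congruence.
Qed.

Definition conn := clos_refl_trans U adj.

Lemma conn_ball w u : conn w u -> exists k, In u (ball w k).
Proof.
  intro H. apply clos_rt_rtn1 in H. induction H as [|y z Hyz _ [k Hk]].
  - exists 0; simpl; auto.
  - exists (S k). simpl. apply in_or_app. right. apply in_flat_map. exists y. split; auto.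
Qed.

Lemma conn_sym u u' : conn u u' -> conn u' u.
Proof.
  induction 1 as [u u' [H1 [H2 [r [r' [? [? E]]]]]]| |]; [|apply rt_refl| eapply rt_trans; eauto].
  apply rt_step. split; auto; split; auto. exists r', r. auto.
Qed.

Definition entry_stage (w u : U) : nat :=
  match excluded_middle_informative (exists k, matched (stage w k) u) with
  | left H => proj1_sig (constructive_indefinite_description _ H) | right _ => 0 end.
Definition final_mate (w u : U) : nat := mate (stage w (entry_stage w u)) u.

Lemma final_mate_at w u k : matched (stage w k) u -> entry_stage w u <= k ->
  mate (stage w k) u = final_mate w u.
Proof.
  intros H Hk. unfold final_mate. apply stage_mono; auto.
  unfold entry_stage. destruct (excluded_middle_informative _) as [He|He]; [apply proj2_sig|].
  exfalso; eauto.
Qed.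

(** Within the component of [w], the eventual partners form a matching:
    any two vertices are matched together at a late enough stage. *)
Lemma final_mate_matching w u u' : conn w u -> conn w u' -> PU u -> PU u' ->
  final_mate w u < n /\ (nb u (final_mate w u) = nb u' (final_mate w u') -> u = u').
Proof.
  intros C1 C2 Hu Hu'. destruct (conn_ball C1) as [k1 Hk1]. destruct (conn_ball C2) as [k2 Hk2].
  assert (D1 : matched (stage w (S k1)) u) by (apply run_covers; auto; apply stage_valid).
  assert (D2 : matched (stage w (S k2)) u') by (apply run_covers; auto; apply stage_valid).
  set (k := entry_stage w u + entry_stage w u' + S k1 + S k2).
  assert (E1 : matched (stage w k) u) by (apply stage_mono with (S k1); auto; unfold k; lia).
  assert (E2 : matched (stage w k) u') by (apply stage_mono with (S k2); auto; unfold k; lia).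
  assert (F1 : mate (stage w k) u = final_mate w u) by (apply final_mate_at; auto; unfold k; lia).
  assert (F2 : mate (stage w k) u' = final_mate w u') by (apply final_mate_at; auto; unfold k; lia).
  destruct (stage_valid w k) as [I1 [I2 _]].
  split; [rewrite <- F1; apply I1; auto|].
  rewrite <- F1, <- F2. apply I2; auto.
Qed.

Definition root (u : U) : U := epsilon (inhabits u) (conn u).

Lemma root_conn u : conn u (root u).
Proof. exact (epsilon_spec (inhabits u) (conn u) (ex_intro _ u (rt_refl _ _ u))). Qed.

Lemma root_eq u u' : conn u u' -> root u = root u'.
Proof.
  intro H. assert (Hc : conn u = conn u').
  { apply functional_extensionality. intro w. apply propositional_extensionality. split; intro H'.
    - eapply rt_trans; [apply conn_sym; exact H| exact H'].
    - eapply rt_trans; eauto. }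
  unfold root. rewrite Hc. apply epsilon_inh_irrelevance. exists u'. apply rt_refl.
Qed.

(** Hall's theorem: match each vertex as in the stages of its own component. *)
Theorem hall_matching : exists M : U -> nat, (forall u, PU u -> M u < n) /\
  (forall u u', PU u -> PU u' -> nb u (M u) = nb u' (M u') -> u = u').
Proof.
  assert (Hroot : forall u, conn (root u) u) by (intro; apply conn_sym, root_conn).
  exists (fun u => final_mate (root u) u). split.
  - intros u Hu. apply (final_mate_matching (u' := u)); auto.
  - intros u u' Hu Hu' E.
    assert (Hr1 := proj1 (final_mate_matching (Hroot u) (Hroot u) Hu Hu)).
    assert (Hr2 := proj1 (final_mate_matching (Hroot u') (Hroot u') Hu' Hu')).
    assert (Er : root u = root u').
    { apply root_eq, rt_step. split; auto; split; auto. eexists _, _; eauto. }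
    rewrite <- Er in E. eapply final_mate_matching; [| | | |exact E]; auto.
    rewrite Er. apply Hroot.
Qed.

End Hall.

Lemma NoDup_prod (A B : Type) (l : list A) (l' : list B) :
  NoDup l -> NoDup l' -> NoDup (list_prod l l').
Proof.
  induction 1 as [|a l Ha Hl IH]; intros Hl'; simpl; [constructor|].
  apply NoDup_app; auto.
  - apply NoDup_map_NoDup_ForallPairs; auto. intros y y' _ _ E. injection E; auto.
  - intros [a' b] H1 H2. apply in_map_iff in H1 as [y [E _]]. injection E; intros; subst.
    apply in_prod_iff in H2 as [H2 _]. contradiction.
Qed.

Lemma divmod_small len r i : i < len -> (r * len + i) / len = r /\ (r * len + i) mod len = i.
Proof.
  intro H. split.
  - symmetry. apply Nat.div_unique with i; auto. lia.
  - symmetry. apply Nat.mod_unique with r; auto. lia.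
Qed.

Section Cancellation.
Variables (Sg : InvSemigroup) (X : Type) (alpha : Rep Sg X).

Lemma pts_tmul n (x : Typ X) i a :
  pts (tmul n x) (i, a) <-> i < n * length x /\ pts x (i mod length x, a).
Proof.
  revert i. induction n; intro i; simpl.
  - unfold pts; simpl. split; [destruct i; intros []| lia].
  - unfold tadd. rewrite pts_app, IHn. split.
    + intros [[H1 H2]|[H1 [H2 H3]]].
      * split; [lia|]. rewrite Nat.mod_small; auto.
      * split; [lia|]. replace i with ((i - length x) + 1 * length x) by lia.
        rewrite Nat.Div0.mod_add. auto.
    + intros [H1 H2]. destruct (Nat.lt_ge_cases i (length x)) as [H|H].
      * left. rewrite Nat.mod_small in H2; auto.
      * right. split; [auto|]. split; [lia|].
        replace i with ((i - length x) + 1 * length x) in H2 by lia.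
        rewrite Nat.Div0.mod_add in H2. auto.
Qed.

Definition copy (len r : nat) (u : pt X) : pt X := (r * len + fst u, snd u).
Definition original (len : nat) (q : pt X) : pt X := (fst q mod len, snd q).

Lemma copy_pts n (x : Typ X) u r : pts x u -> r < n -> pts (tmul n x) (copy (length x) r u).
Proof.
  destruct u as [i a]. intros Hu Hr. assert (Hb := pts_bound _ _ Hu). simpl in Hb.
  unfold copy; simpl. apply pts_tmul. destruct (divmod_small r Hb) as [_ ->]. split; auto. nia.
Qed.

Lemma original_pts n (y : Typ X) q : pts (tmul n y) q ->
  fst q / length y < n /\ copy (length y) (fst q / length y) (original (length y) q) = q /\
  pts y (original (length y) q).
Proof.
  destruct q as [j b]. intro Hq. apply pts_tmul in Hq as [H1 H2]. unfold copy, original; simpl.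
  split; [apply Nat.Div0.div_lt_upper_bound; lia|]. split; auto.
  f_equal. rewrite (Nat.div_mod_eq j (length y)) at 3. lia.
Qed.

Lemma original_copy (x : Typ X) u r : pts x u -> original (length x) (copy (length x) r u) = u.
Proof.
  destruct u as [i a]. intro Hu. assert (Hb := pts_bound _ _ Hu). simpl in Hb.
  unfold copy, original; simpl. destruct (divmod_small r Hb) as [_ ->]. reflexivity.
Qed.

Lemma copy_inj (x : Typ X) u u' r r' : pts x u -> pts x u' ->
  copy (length x) r u = copy (length x) r' u' -> r = r' /\ u = u'.
Proof.
  destruct u as [i a], u' as [i' a']. intros Hu Hu' E. unfold copy in E; simpl in E.
  injection E; intros Ea Ei; subst a'.
  assert (B1 := pts_bound _ _ Hu). assert (B2 := pts_bound _ _ Hu'). simpl in B1, B2.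
  destruct (divmod_small r B1) as [D1 M1]. destruct (divmod_small r' B2) as [D2 M2].
  rewrite Ei in D1, M1. rewrite D1 in D2. rewrite M1 in M2. subst. rewrite D2, M2. auto.
Qed.

(** From a piecewise bijection [H : n x -> n y] we get the bipartite graph in
    which [u] in [x] is adjacent to the originals of the images of its copies. *)
Section Copies.
Variables (n : nat) (x y : Typ X) (H : pt X -> pt X).
Hypotheses (Hn : 1 <= n) (HH : PBij alpha (pts (tmul n x)) (pts (tmul n y)) H).

Definition nb (u : pt X) (r : nat) : pt X := original (length y) (H (copy (length x) r u)).

Lemma nb_pts u r : pts x u -> r < n -> pts y (nb u r).
Proof.
  intros Hu Hr. destruct HH as [[_ [Hm _]] _].
  apply (original_pts n), Hm, copy_pts; auto.
Qed.

(** A point of [y] has at most [n] preimages under the copies of [H], so the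
    graph is locally finite. *)
Definition nb_list (u : pt X) : list (pt X) :=
  flat_map (fun r => map (fun r' => original (length x)
     (inv_on (pts (tmul n x)) H (copy (length y) r' (nb u r)))) (seq 0 n)) (seq 0 n).

Lemma nb_locally_finite u u' : adj n (pts x) nb u u' -> In u' (nb_list u).
Proof.
  intros [Hu [Hu' [r [r' [Hr [Hr' E]]]]]]. destruct HH as [[_ [Hm Hi]] _].
  unfold nb_list. apply in_flat_map. exists r. split; [apply in_seq; lia|].
  set (q' := H (copy (length x) r' u')).
  assert (Hq' : pts (tmul n y) q') by (apply Hm, copy_pts; auto).
  destruct (original_pts n y q' Hq') as [Q1 [Q2 _]].
  apply in_map_iff. exists (fst q' / length y). split; [|apply in_seq; lia].
  rewrite E. unfold nb. fold q'. rewrite Q2. unfold q'.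
  rewrite inv_on_h by (auto; apply copy_pts; auto). apply original_copy; auto.
Qed.

(** Hall's condition: the [n |W|] copies of a finite [W] are sent injectively
    into the [n |N(W)|] copies of its neighbourhood. *)
Lemma nb_Hall : Hall n (pts x) nb (fun _ => False) (fun _ => False).
Proof.
  intros W HW. destruct HH as [[_ [Hm Hi]] _].
  eapply Nat.le_trans; [|apply card_incl; intros v Hv; apply In_free_neigh; split; [exact Hv| tauto]].
  set (W' := nodup eqd W).
  assert (HW' : forall u, In u W' -> pts x u) by (intros u Hu; apply nodup_In in Hu; apply HW; auto).
  set (Src := map (fun p => H (copy (length x) (fst p) (snd p))) (list_prod (seq 0 n) W')).
  set (Dst := map (fun p => copy (length y) (fst p) (snd p))
                  (list_prod (seq 0 n) (nodup eqd (neigh n nb W)))).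
  assert (N1 : NoDup Src).
  { apply NoDup_map_NoDup_ForallPairs; [|apply NoDup_prod; [apply seq_NoDup| apply NoDup_nodup]].
    intros [r u] [r' u'] H1 H2 E. apply in_prod_iff in H1 as [H1 H1'], H2 as [H2 H2'].
    apply in_seq in H1, H2. apply HW' in H1', H2'. simpl in E.
    apply Hi in E; try (apply copy_pts; auto; lia).
    destruct (copy_inj x H1' H2' E) as [-> ->]. reflexivity. }
  assert (I1 : incl Src Dst).
  { intros q Hq. apply in_map_iff in Hq as [[r u] [<- Hp]].
    apply in_prod_iff in Hp as [Hr Hu]. apply in_seq in Hr. simpl.
    set (q := H (copy (length x) r u)).
    assert (Hq : pts (tmul n y) q) by (apply Hm, copy_pts; [apply HW'; auto| lia]).
    destruct (original_pts n y q Hq) as [Q1 [Q2 _]].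
    apply in_map_iff. exists (fst q / length y, original (length y) q). split; [exact Q2|].
    apply in_prod_iff. split; [apply in_seq; lia|]. apply nodup_In, In_neigh.
    exists u, r. split; [apply nodup_In in Hu; auto| split; [lia| reflexivity]]. }
  assert (L := NoDup_incl_length N1 I1). unfold Src, Dst in L.
  rewrite !length_map, !length_prod, length_seq in L.
  unfold card. fold W'. apply (Nat.mul_le_mono_pos_l _ _ n); [lia| exact L].
Qed.

(** A matching of this graph is a piecewise injection [x -> y]: its moves are
    those of [H], with indices reduced modulo [|x|] and [|y|]. *)
Lemma matching_PInj M : (forall u, pts x u -> M u < n) ->
  (forall u u', pts x u -> pts x u' -> nb u (M u) = nb u' (M u') -> u = u') ->
  PInj alpha (pts x) (pts y) (fun u => nb u (M u)).
Proof.
  intros HM1 HM2. destruct HH as [[[ms Hms] _] _].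
  set (reduce := fun m : move Sg => ((fst (fst m), snd (fst m) mod length x), snd m mod length y)).
  split; [|split; [intros u Hu; apply nb_pts; auto| exact HM2]].
  exists (map reduce ms). intros u Hu.
  destruct (Hms _ (@copy_pts n x u (M u) Hu (HM1 _ Hu))) as [m [Im [[O1 O2] E]]].
  exists (reduce m). split; [apply in_map; auto|]. split; [split; auto|].
  - simpl. rewrite <- O1.
    change (fst u = fst (original (length x) (copy (length x) (M u) u))).
    rewrite original_copy; auto.
  - unfold nb. rewrite E. reflexivity.
Qed.

Lemma cancel_PInj : exists h, PInj alpha (pts x) (pts y) h.
Proof.
  destruct (hall_matching nb_list nb_locally_finite nb_Hall) as [M [HM1 HM2]].
  exists (fun u => nb u (M u)). apply matching_PInj; auto.
Qed.

End Copies.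

Lemma tmul_cancel n x y : 1 <= n -> teq alpha (tmul n x) (tmul n y) -> teq alpha x y.
Proof.
  intros Hn Ht.
  destruct (teq_equi Ht) as [H1 HH1], (teq_equi (teq_sym Ht)) as [H2 HH2].
  destruct (cancel_PInj x y Hn HH1) as [h1 ?], (cancel_PInj y x Hn HH2) as [h2 ?].
  eapply teq_of_PInj; eauto.
Qed.
End Cancellation.

Section Absorption.
Variables (Sg : InvSemigroup) (X : Type) (alpha : Rep Sg X).
Notation teq := (teq alpha).

Lemma tmul_add a b (x : Typ X) : tmul (a + b) x = tmul a x ++ tmul b x.
Proof. induction a; simpl; auto. unfold tadd. rewrite IHa, app_assoc. reflexivity. Qed.

Lemma tmul_double n (x : Typ X) : tmul n (tmul 2 x) = tmul (n + n) x.
Proof.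
  induction n; [reflexivity|].
  change (tmul (S n) (tmul 2 x)) with (tmul 2 x ++ tmul n (tmul 2 x)). rewrite IHn.
  rewrite Nat.add_succ_r. change (tmul (S (S (n + n))) x) with (x ++ (x ++ tmul (n + n) x)).
  change (tmul 2 x) with (x ++ (x ++ [])). rewrite app_nil_r, <- app_assoc. reflexivity.
Qed.

Lemma tmul_absorb n (x : Typ X) : teq (tmul (n + 1) x) (tmul n x) ->
  forall k, teq (tmul (n + k) x) (tmul n x).
Proof.
  intros Habs k. induction k as [|k IH]; [rewrite Nat.add_0_r; apply teq_refl|].
  replace (n + S k) with ((n + 1) + k) by lia. rewrite tmul_add.
  eapply teq_trans; [apply teq_addr, Habs|]. rewrite <- tmul_add. exact IH.
Qed.

(** [(n+1) x <= n x] gives [(n+1) x = n x], hence [(n+1)(2x) = (n+1) x],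
    and [2 x = x] by cancellation. *)
Lemma tle_succ_double n (x : Typ X) : tle alpha (tmul (n + 1) x) (tmul n x) -> teq x (tmul 2 x).
Proof.
  intro Hle.
  assert (Habs : teq (tmul (n + 1) x) (tmul n x)).
  { apply tle_antisym; [exact Hle|]. exists x.
    rewrite tmul_add. simpl. unfold tadd. rewrite app_nil_r. apply teq_refl. }
  apply teq_sym, (tmul_cancel (n := n + 1)); [lia|].
  rewrite tmul_double. replace (n + 1 + (n + 1)) with (n + (n + 2)) by lia.
  eapply teq_trans; [apply tmul_absorb; exact Habs| apply teq_sym; exact Habs].
Qed.

End Absorption.

Theorem mainTheorem13 (S : InvSemigroup) (X : Type) (alpha : Rep S X)
  (Scount : countable S) :
  (forall x y : Typ X, tle alpha x y -> tle alpha y x -> teq alpha x y) /\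
  (forall A : set X, paradoxical alpha A <->
     teq alpha (tcls A) (tmul 2 (tcls A))) /\
  (forall (x y : Typ X) (n : nat), 1 <= n ->
     teq alpha (tmul n x) (tmul n y) -> teq alpha x y) /\
  (forall (x : Typ X) (n : nat), tle alpha (tmul (n + 1) x) (tmul n x) ->
     teq alpha x (tmul 2 x)).
Proof.
  split; [|split; [|split]].
  - exact (@tle_antisym S X alpha).
  - intro A. split; [apply paradoxical_double| apply double_paradoxical].
  - intros x y n. apply tmul_cancel.
  - intros x n. apply tle_succ_double.
Qed.
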